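(* Let $H=(v_1,\dots,v_6)$ be an embedded equilateral hexagon, considered up to translations and rotations, whose action-angle coordinates $(d_1,d_2,d_3,\theta_1,\theta_2,\theta_3)$ for the $T_{135}$ triangulation are defined. If the Joint Chirality-Curl satisfies $J(H)=(1,-1)$ or $J(H)=(-1,-1)$, then $\theta_i\in(\pi,2\pi)$ for $i=1,2,3$.
   Context: An equilateral hexagon is an ordered 6-tuple $H=(v_1,\dots,v_6)$ in $\mathbb{R}^3$ with $\|v_i-v_{i+1}\|=1$ (indices mod 6), edges $e_i=[v_i,v_{i+1}]$, oriented $v_1\to v_2\to\cdots\to v_6\to v_1$; embedded means non-adjacent edges are disjoint and adjacent ones meet only at their common endpoint. Standard position: $v_1=0$, $v_3$ on the positive $x$-axis, $v_5$ in the $xy$-plane with positive $y$-coordinate. Action-angle coordinates ($T_{135}$ triangulation), defined when $v_1,v_3,v_5$ are not collinear and $0<d_i<2$: $d_1=\|v_3-v_1\|$, $d_2=\|v_5-v_3\|$, $d_3=\|v_1-v_5\|$; with $m_1,m_2,m_3$ the midpoints of $[v_1,v_3],[v_3,v_5],[v_5,v_1]$, $u_1,u_2,u_3$ the unit vectors in the $xy$-plane perpendicular to these segments pointing toward the opposite vertex of triangle $v_1v_3v_5$ (toward $v_5,v_1,v_3$ respectively), and $e_z=(0,0,1)$, the angles $\theta_i\in[0,2\pi)$ are determined by $v_{2i}=m_i+\tfrac12\sqrt{4-d_i^2}(\cos\theta_i\,u_i+\sin\theta_i\,e_z)$ (regular planar hexagon: all $\theta_i=\pi$). Joint Chirality-Curl: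 $curl(H)=\operatorname{sign}\big((v_3-v_1)\times(v_5-v_1)\cdot(v_2-v_1)\big)$. For $i=2,4,6$, $T_i$ is the open triangular disk with vertices $v_{i-1},v_i,v_{i+1}$, oriented by the right-hand rule (normal $(v_i-v_{i-1})\times(v_{i+1}-v_i)$), and $\Delta_i$ is the algebraic intersection number of $T_i$ with the oriented polygon $H$. Then $J(H)=(\Delta_2\Delta_4\Delta_6,\ \Delta_2^2\Delta_4^2\Delta_6^2\,curl(H))$. *)

From Stdlib Require Import Reals Lra Lia Classical ClassicalEpsilon.
Open Scope R_scope.

Record vec := mkv { vx : R; vy : R; vz : R }.

Definition vadd (a b : vec) : vec := mkv (vx a + vx b) (vy a + vy b) (vz a + vz b).
Definition vsub (a b : vec) : vec := mkv (vx a - vx b) (vy a - vy b) (vz a - vz b).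
Definition vscale (k : R) (a : vec) : vec := mkv (k * vx a) (k * vy a) (k * vz a).
Definition dot (a b : vec) : R := vx a * vx b + vy a * vy b + vz a * vz b.
Definition cross (a b : vec) : vec :=
  mkv (vy a * vz b - vz a * vy b) (vz a * vx b - vx a * vz b) (vx a * vy b - vy a * vx b).
Definition vnorm (a : vec) : R := sqrt (dot a a).
Definition vzero : vec := mkv 0 0 0.
Definition ez : vec := mkv 0 0 1.
Definition midpoint (a b : vec) : vec := vscale (1/2) (vadd a b).

Definition sgn (x : R) : R :=
  if Rlt_dec 0 x then 1 else if Rlt_dec x 0 then -1 else 0.

Definition ind (P : Prop) : R :=
  if excluded_middle_informative P then 1 else 0.

Record hexagon := mkhex { hv1 : vec; hv2 : vec; hv3 : vec; hv4 : vec; hv5 : vec; hv6 : vec }.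

(* vertex v_k, indices taken mod 6 (v_0 = v_6, v_7 = v_1, ...) *)
Definition vert (H : hexagon) (k : nat) : vec :=
  match (k mod 6)%nat with
  | 1%nat => hv1 H | 2%nat => hv2 H | 3%nat => hv3 H
  | 4%nat => hv4 H | 5%nat => hv5 H | _ => hv6 H
  end.

Definition equilateral (H : hexagon) : Prop :=
  forall i : nat, (1 <= i <= 6)%nat -> vnorm (vsub (vert H i) (vert H (i + 1))) = 1.

Definition in_seg (p a b : vec) : Prop :=
  exists t, 0 <= t <= 1 /\ p = vadd a (vscale t (vsub b a)).

(* edges e_i = [v_i, v_{i+1}] and e_j are non-adjacent (and distinct) *)
Definition nonadjacent (i j : nat) : Prop :=
  (i mod 6 <> j mod 6)%nat /\ ((i + 1) mod 6 <> j mod 6)%nat /\ ((j + 1) mod 6 <> i mod 6)%nat.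

Definition embedded (H : hexagon) : Prop :=
  (forall i j : nat, (1 <= i <= 6)%nat -> (1 <= j <= 6)%nat -> nonadjacent i j ->
     forall p, in_seg p (vert H i) (vert H (i + 1)) ->
               ~ in_seg p (vert H j) (vert H (j + 1)))
  /\
  (forall i : nat, (1 <= i <= 6)%nat ->
     forall p, in_seg p (vert H i) (vert H (i + 1)) ->
               in_seg p (vert H (i + 1)) (vert H (i + 2)) ->
               p = vert H (i + 1)).

Definition standard_position (H : hexagon) : Prop :=
  hv1 H = vzero /\
  vx (hv3 H) > 0 /\ vy (hv3 H) = 0 /\ vz (hv3 H) = 0 /\
  vz (hv5 H) = 0 /\ vy (hv5 H) > 0.

Definition diag (H : hexagon) (i : nat) : R :=
  vnorm (vsub (vert H (2 * i + 1)) (vert H (2 * i - 1))).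

Definition collinear (a b c : vec) : Prop := cross (vsub b a) (vsub c a) = vzero.

Definition aa_defined (H : hexagon) : Prop :=
  ~ collinear (hv1 H) (hv3 H) (hv5 H) /\
  forall i : nat, (1 <= i <= 3)%nat -> 0 < diag H i < 2.

Definition is_perp_unit (p q o u : vec) : Prop :=
  vz u = 0 /\ dot u u = 1 /\ dot u (vsub q p) = 0 /\ dot u (vsub o (midpoint p q)) > 0.

Definition is_u (H : hexagon) (i : nat) (u : vec) : Prop :=
  is_perp_unit (vert H (2 * i - 1)) (vert H (2 * i + 1)) (vert H (2 * i + 3)) u.

Definition is_angle (H : hexagon) (i : nat) (u : vec) (theta : R) : Prop :=
  0 <= theta < 2 * PI /\
  vert H (2 * i) =
    vadd (midpoint (vert H (2 * i - 1)) (vert H (2 * i + 1)))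
         (vscale (1/2 * sqrt (4 - (diag H i)^2))
                 (vadd (vscale (cos theta) u) (vscale (sin theta) ez))).

Definition curl (H : hexagon) : R :=
  sgn (dot (cross (vsub (hv3 H) (hv1 H)) (vsub (hv5 H) (hv1 H))) (vsub (hv2 H) (hv1 H))).

Definition in_open_tri (p a b c : vec) : Prop :=
  exists al be ga, 0 < al /\ 0 < be /\ 0 < ga /\ al + be + ga = 1 /\
    p = vadd (vscale al a) (vadd (vscale be b) (vscale ga c)).

(* Local contribution of the oriented edge [a,b] to the algebraic intersection
   number with the open triangle T = (x,y,z) oriented by the normal
   n = (y - x) x (z - y).  A transversal crossing in the interior of the edge counts
   sign(n . (b - a)); a crossing at an endpoint of the edge counts half of it
   (so that a crossing through a vertex of H, shared by two edges, counts once, and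
   a touching at a vertex counts 0).  Non-transversal edges contribute 0. *)
Definition edge_int (x y z a b : vec) : R :=
  let n := cross (vsub y x) (vsub z y) in
  sgn (dot n (vsub b a)) *
  ( ind (exists t, 0 < t < 1 /\ in_open_tri (vadd a (vscale t (vsub b a))) x y z)
  + 1/2 * ind (in_open_tri a x y z) + 1/2 * ind (in_open_tri b x y z)).

(* Delta_i : algebraic intersection number of T_i = (v_{i-1}, v_i, v_{i+1})
   with the oriented polygon H (sum over the edges e_1..e_6) *)
Definition Delta (H : hexagon) (i : nat) : R :=
  let x := vert H (i + 5) in let y := vert H i in let z := vert H (i + 1) in
  edge_int x y z (hv1 H) (hv2 H) + edge_int x y z (hv2 H) (hv3 H) +
  edge_int x y z (hv3 H) (hv4 H) + edge_int x y z (hv4 H) (hv5 H) +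
  edge_int x y z (hv5 H) (hv6 H) + edge_int x y z (hv6 H) (hv1 H).

Definition JCC (H : hexagon) : R * R :=
  (Delta H 2 * Delta H 4 * Delta H 6,
   (Delta H 2)^2 * (Delta H 4)^2 * (Delta H 6)^2 * curl H).

(* In standard position [v1], [v3], [v5] lie in the plane [z = 0], and the height of [v_2i]
   above it is [1/2 sqrt (4 - d_i^2) sin theta_i]; so the claim is that [v2], [v4], [v6] all
   lie strictly below that plane.  Curl [-1] puts [v2] below.  If [v4] or [v6] were not below,
   one of the triangles [T2], [T4], [T6] would have algebraic intersection number 0 with the
   hexagon, whereas [J = (+-1, -1)] forces curl [-1] and all [Delta_i <> 0]: either the triangle
   lies strictly on one side of the plane and the rest of the polygon in the closed opposite
   half-space, or the triangle lies in the plane and the polygon only touches it. *)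

From Stdlib Require Import Reals Lra Lia Classical ClassicalEpsilon.
Open Scope R_scope.

Lemma sgn_cases x : (sgn x = 1 /\ 0 < x) \/ (sgn x = -1 /\ x < 0) \/ (sgn x = 0 /\ x = 0).
Proof.
  unfold sgn. destruct (Rlt_dec 0 x); [now left|].
  destruct (Rlt_dec x 0); [now right; left|right; right; split; lra].
Qed.

Lemma sgn_0 : sgn 0 = 0.
Proof. destruct (sgn_cases 0) as [[_ h]|[[_ h]|[s _]]]; lra. Qed.

Lemma sgn_mul x y : sgn (x * y) = sgn x * sgn y.
Proof.
  destruct (sgn_cases x) as [[sx hx]|[[sx hx]|[sx hx]]];
  destruct (sgn_cases y) as [[sy hy]|[[sy hy]|[sy hy]]];
  destruct (sgn_cases (x * y)) as [[s h]|[[s h]|[s h]]];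
  rewrite sx, sy, s; subst; nra.
Qed.

Lemma sgn_opp x : sgn (- x) = - sgn x.
Proof.
  destruct (sgn_cases x) as [[sx hx]|[[sx hx]|[sx hx]]];
  destruct (sgn_cases (- x)) as [[s h]|[[s h]|[s h]]]; rewrite sx, s; lra.
Qed.

Lemma ind_false (P : Prop) : ~ P -> ind P = 0.
Proof. intros h. unfold ind. destruct (excluded_middle_informative P); tauto. Qed.

Lemma dot_convex3 w x y z al be ga :
  dot w (vadd (vscale al x) (vadd (vscale be y) (vscale ga z)))
  = al * dot w x + be * dot w y + ga * dot w z.
Proof. destruct w, x, y, z; unfold dot, vadd, vscale; simpl; ring. Qed.

Lemma dot_seg w a b t :
  dot w (vadd a (vscale t (vsub b a))) = (1 - t) * dot w a + t * dot w b.
Proof. destruct w, a, b; unfold dot, vadd, vscale, vsub; simpl; ring. Qed.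

Lemma dot_scale_ez s p : dot (vscale s ez) p = s * vz p.
Proof. destruct p; unfold dot, vscale, ez; simpl; ring. Qed.

Definition tri_normal (x y z : vec) : vec := cross (vsub y x) (vsub z y).

Lemma tri_normal_rotate x y z : tri_normal y z x = tri_normal x y z.
Proof. destruct x, y, z; unfold tri_normal, cross, vsub; simpl; f_equal; ring. Qed.

Lemma in_open_tri_rotate p x y z : in_open_tri p x y z -> in_open_tri p y z x.
Proof.
  intros [al [be [ga [hal [hbe [hga [hsum hp]]]]]]].
  exists be, ga, al; repeat split; try lra.
  subst p; destruct x, y, z; unfold vadd, vscale; simpl; f_equal; ring.
Qed.

Lemma in_open_tri_halfspace w c p x y z :
  dot w x <= c -> dot w y < c -> dot w z <= c -> in_open_tri p x y z -> dot w p < c.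
Proof.
  intros hx hy hz [al [be [ga [hal [hbe [hga [hsum hp]]]]]]].
  subst p; rewrite dot_convex3; nra.
Qed.

Lemma in_open_tri_plane w c p x y z :
  dot w x = c -> dot w y = c -> dot w z = c -> in_open_tri p x y z -> dot w p = c.
Proof.
  intros hx hy hz [al [be [ga [hal [hbe [hga [hsum hp]]]]]]].
  subst p; rewrite dot_convex3, hx, hy, hz; nra.
Qed.

(* Positive weights make [y - x] a multiple of [z - x]. *)
Lemma in_open_tri_first_vertex x y z : in_open_tri x x y z -> tri_normal x y z = vzero.
Proof.
  intros [al [be [ga [hal [hbe [hga [hsum hx]]]]]]].
  destruct x as [x1 x2 x3], y as [y1 y2 y3], z as [z1 z2 z3].
  unfold vadd, vscale in hx; injection hx as e1 e2 e3.
  set (k := - ga / be).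
  assert (Hy : forall xi yi zi, xi = al * xi + (be * yi + ga * zi) -> yi = xi + k * (zi - xi)).
  { intros xi yi zi e. unfold k. field_simplify; [|lra].
    apply (Rmult_eq_reg_l be); [|lra]. field_simplify; [|lra]. nra. }
  rewrite (Hy _ _ _ e1), (Hy _ _ _ e2), (Hy _ _ _ e3).
  unfold tri_normal, cross, vsub, vzero; simpl; f_equal; ring.
Qed.

Lemma in_open_tri_last_vertex x y z : in_open_tri z x y z -> tri_normal x y z = vzero.
Proof.
  intros h. rewrite <- tri_normal_rotate, <- tri_normal_rotate.
  apply in_open_tri_first_vertex, in_open_tri_rotate, in_open_tri_rotate, h.
Qed.

Section EdgeContribution.
Variables x y z : vec.

Lemma edge_int_eq a b : edge_int x y z a b =
  sgn (dot (tri_normal x y z) (vsub b a)) *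
  ( ind (exists t, 0 < t < 1 /\ in_open_tri (vadd a (vscale t (vsub b a))) x y z)
  + 1/2 * ind (in_open_tri a x y z) + 1/2 * ind (in_open_tri b x y z)).
Proof. reflexivity. Qed.

Lemma edge_int_parallel a b : dot (tri_normal x y z) (vsub b a) = 0 -> edge_int x y z a b = 0.
Proof. intros h. rewrite edge_int_eq, h, sgn_0. ring. Qed.

Lemma edge_int_side1 : edge_int x y z x y = 0.
Proof.
  apply edge_int_parallel. destruct x, y, z; unfold tri_normal, dot, cross, vsub; simpl; ring.
Qed.

Lemma edge_int_side2 : edge_int x y z y z = 0.
Proof.
  apply edge_int_parallel. destruct x, y, z; unfold tri_normal, dot, cross, vsub; simpl; ring.
Qed.

Lemma edge_int_separated w c a b :
  (forall p, in_open_tri p x y z -> dot w p < c) -> c <= dot w a -> c <= dot w b ->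
  edge_int x y z a b = 0.
Proof.
  intros hT ha hb.
  assert (miss : forall p, c <= dot w p -> ~ in_open_tri p x y z).
  { intros p hp hin. specialize (hT p hin). lra. }
  rewrite edge_int_eq, (ind_false _ (miss a ha)), (ind_false _ (miss b hb)),
    (ind_false (exists t, _)); [ring|].
  intros [t [ht hin]]. refine (miss _ _ hin). rewrite dot_seg. nra.
Qed.

Hypotheses (hx : vz x = 0) (hy : vz y = 0) (hz : vz z = 0).

Lemma dot_tri_normal_flat v : dot (tri_normal x y z) v = vz (tri_normal x y z) * vz v.
Proof.
  destruct x, y, z, v; simpl in *; subst; unfold tri_normal, dot, cross, vsub; simpl; ring.
Qed.

Lemma flat_tri_miss p : vz p <> 0 -> ~ in_open_tri p x y z.
Proof.
  intros hp hin. apply hp. rewrite <- (Rmult_1_l (vz p)), <- dot_scale_ez.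
  apply (in_open_tri_plane _ _ _ x y z); try exact hin; rewrite dot_scale_ez; lra.
Qed.

Lemma edge_int_leave_plane a b : vz a = 0 -> vz b <> 0 ->
  edge_int x y z a b =
  1/2 * sgn (vz (tri_normal x y z)) * sgn (vz b) * ind (in_open_tri a x y z).
Proof.
  intros ha hb.
  rewrite edge_int_eq, (ind_false (in_open_tri b _ _ _)) by (apply flat_tri_miss; lra).
  rewrite (ind_false (exists t, _)).
  - rewrite dot_tri_normal_flat, sgn_mul. simpl; rewrite ha, Rminus_0_r. ring.
  - intros [t [ht hin]]. refine (flat_tri_miss _ _ hin). simpl. rewrite ha.
    intro e. apply hb. nra.
Qed.

Lemma edge_int_enter_plane a b : vz a <> 0 -> vz b = 0 ->
  edge_int x y z a b =
  - (1/2 * sgn (vz (tri_normal x y z)) * sgn (vz a) * ind (in_open_tri b x y z)).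
Proof.
  intros ha hb.
  rewrite edge_int_eq, (ind_false (in_open_tri a _ _ _)) by (apply flat_tri_miss; lra).
  rewrite (ind_false (exists t, _)).
  - rewrite dot_tri_normal_flat, sgn_mul. simpl; rewrite hb.
    rewrite Rminus_0_l, sgn_opp. ring.
  - intros [t [ht hin]]. refine (flat_tri_miss _ _ hin). simpl. rewrite hb.
    intro e. apply ha. nra.
Qed.

End EdgeContribution.

Definition hex_rot2 (H : hexagon) : hexagon :=
  mkhex (hv3 H) (hv4 H) (hv5 H) (hv6 H) (hv1 H) (hv2 H).

Lemma Delta_hex_rot2 H : Delta (hex_rot2 H) 2 = Delta H 4.
Proof. unfold Delta, vert; simpl; ring. Qed.

Lemma Delta_hex_rot2_twice H : Delta (hex_rot2 (hex_rot2 H)) 2 = Delta H 6.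
Proof. unfold Delta, vert; simpl; ring. Qed.

Lemma Delta2_eq H : Delta H 2 =
  let T := edge_int (hv1 H) (hv2 H) (hv3 H) in
  T (hv1 H) (hv2 H) + T (hv2 H) (hv3 H) + T (hv3 H) (hv4 H) +
  T (hv4 H) (hv5 H) + T (hv5 H) (hv6 H) + T (hv6 H) (hv1 H).
Proof. reflexivity. Qed.

Lemma Delta2_eq0_separated H s :
  vz (hv1 H) = 0 -> vz (hv3 H) = 0 -> s * vz (hv2 H) < 0 ->
  0 <= s * vz (hv4 H) -> 0 <= s * vz (hv5 H) -> 0 <= s * vz (hv6 H) ->
  Delta H 2 = 0.
Proof.
  intros h1 h3 h2 h4 h5 h6.
  assert (hT : forall p, in_open_tri p (hv1 H) (hv2 H) (hv3 H) -> dot (vscale s ez) p < 0).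
  { intros p. apply in_open_tri_halfspace; rewrite dot_scale_ez; nra. }
  assert (e : forall a b, 0 <= s * vz a -> 0 <= s * vz b ->
            edge_int (hv1 H) (hv2 H) (hv3 H) a b = 0).
  { intros a b ha hb. apply (edge_int_separated _ _ _ _ _ _ _ hT); rewrite dot_scale_ez; lra. }
  rewrite Delta2_eq; simpl.
  rewrite edge_int_side1, edge_int_side2, !e; rewrite ?h1, ?h3; lra.
Qed.

(* The path [v3 v4 v5 v6 v1] meets the plane of [T2] only at [v3], [v5], [v1]; at [v5] it
   touches from one side, so the two half-crossings cancel, and the vertices [v1], [v3] of
   [T2] lie in its interior only if [T2] is degenerate, in which case its normal vanishes. *)
Lemma Delta2_eq0_flat H :
  vz (hv1 H) = 0 -> vz (hv2 H) = 0 -> vz (hv3 H) = 0 -> vz (hv5 H) = 0 ->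
  0 < vz (hv4 H) * vz (hv6 H) -> Delta H 2 = 0.
Proof.
  destruct H as [w1 w2 w3 w4 w5 w6]; simpl; intros h1 h2 h3 h5 h46.
  set (sN := sgn (vz (tri_normal w1 w2 w3))).
  assert (vertex_term : forall p, (in_open_tri p w1 w2 w3 -> tri_normal w1 w2 w3 = vzero) ->
            sN * ind (in_open_tri p w1 w2 w3) = 0).
  { intros p hp. destruct (classic (in_open_tri p w1 w2 w3)) as [hin|hout].
    - unfold sN. rewrite (hp hin). simpl. rewrite sgn_0. ring.
    - rewrite ind_false by exact hout. ring. }
  assert (sgn46 : sgn (vz w4) = sgn (vz w6)).
  { destruct (sgn_cases (vz w4)) as [[s4 ?]|[[s4 ?]|[s4 ?]]];
    destruct (sgn_cases (vz w6)) as [[s6 ?]|[[s6 ?]|[s6 ?]]]; nra. }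
  assert (z4 : vz w4 <> 0) by (intro e; rewrite e in h46; lra).
  assert (z6 : vz w6 <> 0) by (intro e; rewrite e in h46; lra).
  rewrite Delta2_eq; simpl.
  rewrite edge_int_side1, edge_int_side2,
    (edge_int_leave_plane _ _ _ h1 h2 h3 w3 w4), (edge_int_enter_plane _ _ _ h1 h2 h3 w4 w5),
    (edge_int_leave_plane _ _ _ h1 h2 h3 w5 w6), (edge_int_enter_plane _ _ _ h1 h2 h3 w6 w1)
    by assumption.
  fold sN. rewrite sgn46.
  transitivity (1/2 * sgn (vz w6) *
    (sN * ind (in_open_tri w3 w1 w2 w3) - sN * ind (in_open_tri w1 w1 w2 w3))); [ring|].
  rewrite (vertex_term w1 (in_open_tri_first_vertex _ _ _)),
    (vertex_term w3 (in_open_tri_last_vertex _ _ _)).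
  ring.
Qed.

Lemma Delta2_eq0_v2_above H :
  vz (hv1 H) = 0 -> vz (hv3 H) = 0 -> vz (hv5 H) = 0 ->
  0 <= vz (hv2 H) -> vz (hv4 H) < 0 -> vz (hv6 H) < 0 -> Delta H 2 = 0.
Proof.
  intros h1 h3 h5 h2 h4 h6. destruct (Req_dec (vz (hv2 H)) 0) as [e|ne].
  - apply Delta2_eq0_flat; nra.
  - apply (Delta2_eq0_separated H (-1)); lra.
Qed.

Lemma v4_v6_below H :
  vz (hv1 H) = 0 -> vz (hv3 H) = 0 -> vz (hv5 H) = 0 -> vz (hv2 H) < 0 ->
  Delta H 2 <> 0 -> Delta H 4 <> 0 -> Delta H 6 <> 0 ->
  vz (hv4 H) < 0 /\ vz (hv6 H) < 0.
Proof.
  intros h1 h3 h5 h2 D2 D4 D6.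
  destruct (Rlt_or_le (vz (hv4 H)) 0) as [h4|h4];
  destruct (Rlt_or_le (vz (hv6 H)) 0) as [h6|h6]; [tauto|exfalso..].
  - apply D6. rewrite <- Delta_hex_rot2_twice. apply Delta2_eq0_v2_above; assumption.
  - apply D4. rewrite <- Delta_hex_rot2. apply Delta2_eq0_v2_above; assumption.
  - apply D2. apply (Delta2_eq0_separated H 1); lra.
Qed.

Lemma JCC_curl H : snd (JCC H) = -1 ->
  curl H = -1 /\ Delta H 2 <> 0 /\ Delta H 4 <> 0 /\ Delta H 6 <> 0.
Proof.
  unfold JCC, curl; simpl; intros hJ.
  assert (P : 0 <= (Delta H 2 * Delta H 4 * Delta H 6) ^ 2) by apply pow2_ge_0.
  destruct (sgn_cases (dot (cross (vsub (hv3 H) (hv1 H)) (vsub (hv5 H) (hv1 H)))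
                           (vsub (hv2 H) (hv1 H)))) as [[s _]|[[s _]|[s _]]];
    rewrite s in hJ |- *; [nra| |nra].
  repeat split; intro e; rewrite e in hJ; lra.
Qed.

Lemma standard_position_plane H : standard_position H ->
  vz (hv1 H) = 0 /\ vz (hv3 H) = 0 /\ vz (hv5 H) = 0.
Proof. intros (e1 & _ & _ & z3 & z5 & _). rewrite e1. now repeat split. Qed.

Lemma standard_position_curl H : standard_position H -> curl H = -1 -> vz (hv2 H) < 0.
Proof.
  destruct H as [v1 v2 v3 v4 v5 v6]; intros (e1 & x3 & y3 & z3 & z5 & y5); simpl in *.
  subst v1. unfold curl; simpl.
  replace (dot (cross (vsub v3 vzero) (vsub v5 vzero)) (vsub v2 vzero))
    with (vx v3 * vy v5 * vz v2)
    by (destruct v2, v3, v5; simpl in *; subst; unfold dot, cross, vsub; simpl; ring).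
  rewrite !sgn_mul. intros hc.
  destruct (sgn_cases (vx v3)) as [[s3 _]|[[_ ?]|[_ ?]]]; [|lra|lra].
  destruct (sgn_cases (vy v5)) as [[s5 _]|[[_ ?]|[_ ?]]]; [|lra|lra].
  destruct (sgn_cases (vz v2)) as [[s2 _]|[[_ ?]|[s2 _]]]; [|assumption|];
    rewrite s3, s5, s2 in hc; lra.
Qed.

Lemma vz_is_angle H i u theta : is_u H i u -> is_angle H i u theta ->
  vz (vert H (2 * i)) = (vz (vert H (2 * i - 1)) + vz (vert H (2 * i + 1))) / 2
                        + 1/2 * sqrt (4 - diag H i ^ 2) * sin theta.
Proof.
  intros (uz & _) (_ & E). rewrite E.
  unfold midpoint, vadd, vscale, ez; simpl. rewrite uz. field.
Qed.

Lemma angle_of_sin_neg theta : 0 <= theta < 2 * PI -> sin theta < 0 -> PI < theta < 2 * PI.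
Proof.
  intros [t0 t1] hs. split; [|lra].
  destruct (Rle_dec theta PI) as [l|l]; [|lra].
  pose proof (sin_ge_0 theta t0 l). lra.
Qed.

Theorem mainTheorem3 (H : hexagon) :
  equilateral H -> embedded H -> standard_position H -> aa_defined H ->
  (JCC H = (1, -1) \/ JCC H = (-1, -1)) ->
  forall (i : nat) (u : vec) (theta : R),
    (1 <= i <= 3)%nat -> is_u H i u -> is_angle H i u theta ->
    PI < theta < 2 * PI.
Proof.
  intros _ _ Hsp Haa HJ i u theta Hi Hu Ha.
  destruct (JCC_curl H) as (Hc & D2 & D4 & D6).
  { destruct HJ as [e|e]; rewrite e; reflexivity. }
  destruct (standard_position_plane H Hsp) as (z1 & z3 & z5).
  pose proof (standard_position_curl H Hsp Hc) as z2.
  destruct (v4_v6_below H z1 z3 z5 z2 D2 D4 D6) as [z4 z6].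
  assert (below : vz (vert H (2 * i - 1)) = 0 /\ vz (vert H (2 * i + 1)) = 0 /\
                  vz (vert H (2 * i)) < 0).
  { destruct i as [|[|[|[|i]]]]; try lia; simpl; auto. }
  destruct below as (za & zb & zc).
  rewrite (vz_is_angle H i u theta Hu Ha), za, zb in zc.
  assert (Hs : 0 < sqrt (4 - diag H i ^ 2)).
  { destruct Haa as [_ Hd]. specialize (Hd i Hi). apply sqrt_lt_R0. nra. }
  apply angle_of_sin_neg; [apply Ha | nra].
Qed.
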